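(* Let $S=\{(X_m,y_m)\}_{m=1}^T\in\mathcal{S}_T$, let $\tau(1),\tau(2),\dots$ be i.i.d. uniform on $\{1,\dots,T\}$, and let $\bar w_k=\frac1k\sum_{t=1}^k w_t$. Then for every $k\ge1$, $$\mathbb{E}_\tau\Big[\frac1T\sum_{m=1}^T\|X_m\bar w_k-y_m\|^2\Big]\le\mathbb{E}_\tau\Big[\frac1T\sum_{m=1}^T\|(I-P_m)(\bar w_k-w^\star)\|^2\Big]\le\frac1k.$$
   Context: Let $d\ge 1$, $T\ge1$. A task is a pair $(X_m,y_m)$ with $X_m\in\mathbb{R}^{n_m\times d}$, $y_m\in\mathbb{R}^{n_m}$ and $\operatorname{rank}(X_m)<d$. $\mathcal{S}_T$ denotes the set of collections $S=\{(X_m,y_m)\}_{m=1}^T$ of $T$ tasks such that $\|X_m\|\le 1$ (spectral norm) for all $m$ and there exists $w\in\mathbb{R}^d$ with $\|w\|\le 1$ and $y_m=X_mw$ for all $m$. Given $S$ and an ordering $\tau:\mathbb{N}^+\to\{1,\dots,T\}$, the iterates are $w_0=0$ and $w_t=w_{t-1}+X_{\tau(t)}^+(y_{\tau(t)}-X_{\tau(t)}w_{t-1})$, with $A^+$ the Moore–Penrose pseudoinverse. $w^\star$ denotes the minimum Euclidean-norm vector with $X_mw^\star=y_m$ for all $m$. $P_m=I-X_m^+X_m$ is the orthogonal projection onto $\ker X_m$. *)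

From HB Require Import structures.
From Stdlib Require Import ClassicalEpsilon.
From mathcomp Require Import all_boot all_order all_algebra.
From mathcomp Require Import reals.
Set Implicit Arguments. Unset Strict Implicit. Unset Printing Implicit Defensive.
Import Order.TTheory GRing.Theory Num.Theory.
Local Open Scope ring_scope.

Definition sqnorm (R : realType) (p : nat) (v : 'cV[R]_p) : R :=
  \sum_(i < p) (v i 0) ^+ 2.

Definition spec_norm_le1 (R : realType) (p q : nat) (A : 'M[R]_(p, q)) : Prop :=
  forall v : 'cV[R]_q, sqnorm (A *m v) <= sqnorm v.

Definition is_MP (R : realType) (p q : nat) (A : 'M[R]_(p, q)) (B : 'M[R]_(q, p)) : Prop :=
  [/\ A *m B *m A = A, B *m A *m B = B, (A *m B)^T = A *m B & (B *m A)^T = B *m A].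

(* Moore-Penrose pseudoinverse (exists and is unique). *)
Definition pinv (R : realType) (p q : nat) (A : 'M[R]_(p, q)) : 'M[R]_(q, p) :=
  epsilon (inhabits 0) (fun B => is_MP A B).

Definition projker (R : realType) (p q : nat) (A : 'M[R]_(p, q)) : 'M[R]_q :=
  1%:M - pinv A *m A.

Definition in_ST (R : realType) (d T : nat) (n : 'I_T -> nat)
  (X : forall m : 'I_T, 'M[R]_(n m, d)) (y : forall m : 'I_T, 'cV[R]_(n m)) : Prop :=
  (forall m, (\rank (X m) < d)%N) /\
  (forall m, spec_norm_le1 (X m)) /\
  (exists w : 'cV[R]_d, sqnorm w <= 1 /\ forall m, X m *m w = y m).

Definition step (R : realType) (d T : nat) (n : 'I_T -> nat)
  (X : forall m : 'I_T, 'M[R]_(n m, d)) (y : forall m : 'I_T, 'cV[R]_(n m))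
  (w : 'cV[R]_d) (m : 'I_T) : 'cV[R]_d :=
  w + pinv (X m) *m (y m - X m *m w).

(* w_t for the ordering prefix s = [:: tau 1; ...; tau t], starting from w_0 = 0. *)
Definition iterate (R : realType) (d T : nat) (n : 'I_T -> nat)
  (X : forall m : 'I_T, 'M[R]_(n m, d)) (y : forall m : 'I_T, 'cV[R]_(n m))
  (s : seq 'I_T) : 'cV[R]_d :=
  foldl (step X y) 0 s.

(* bar w_k = (1/k) sum_{t=1}^k w_t, for the ordering prefix tau : 'I_k -> 'I_T
   (tau i is tau(i+1) of the paper). *)
Definition avg_iterate (R : realType) (d T : nat) (n : 'I_T -> nat)
  (X : forall m : 'I_T, 'M[R]_(n m, d)) (y : forall m : 'I_T, 'cV[R]_(n m))
  (k : nat) (tau : {ffun 'I_k -> 'I_T}) : 'cV[R]_d :=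
  k%:R^-1 *: \sum_(1 <= t < k.+1)
     iterate X y (take t [seq tau i | i <- enum 'I_k]).

Definition min_norm_sol (R : realType) (d T : nat) (n : 'I_T -> nat)
  (X : forall m : 'I_T, 'M[R]_(n m, d)) (y : forall m : 'I_T, 'cV[R]_(n m)) : 'cV[R]_d :=
  epsilon (inhabits 0) (fun w => (forall m, X m *m w = y m) /\
     forall v, (forall m, X m *m v = y m) -> sqnorm w <= sqnorm v).

(* Expectation over tau(1),...,tau(k) i.i.d. uniform on 'I_T
   (the quantities below only depend on the first k entries of tau). *)
Definition expect_unif (R : realType) (T k : nat) (F : {ffun 'I_k -> 'I_T} -> R) : R :=
  (T ^ k)%:R^-1 * \sum_(tau : {ffun 'I_k -> 'I_T}) F tau.

(* Each step maps the error e = w - w⋆ to e - Q e, where Q = X_m^+ X_m is an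
   orthogonal projection, so by Pythagoras ||e||^2 drops by exactly ||Q e||^2.
   As the next task is drawn independently of the past, the expected drop is
   the expected loss (1/T) sum_m ||Q_m e||^2; telescoping bounds the sum of the
   expected losses of w_1, ..., w_k by ||w⋆||^2 <= 1, and convexity of the loss
   transfers this bound, divided by k, to the average iterate.  The first
   inequality holds pointwise: X_m w - y_m = X_m Q_m (w - w⋆) and ||X_m|| <= 1. *)

From Stdlib Require Import ClassicalEpsilon.
From mathcomp Require Import all_boot all_order all_algebra.
From mathcomp Require Import reals.
From mathcomp Require Import ring.
Import Order.TTheory GRing.Theory Num.Theory.
Set Implicit Arguments. Unset Strict Implicit.
Local Open Scope ring_scope.

Section SquaredNorm.
Variable R : realType.

Lemma sqr_sum_le (I : Type) (r : seq I) (x : I -> R) :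
  (\sum_(i <- r) x i) ^+ 2 <= (size r)%:R * \sum_(i <- r) x i ^+ 2.
Proof.
set N : R := (size r)%:R; set S := \sum_(i <- r) x i; set Q := \sum_(i <- r) x i ^+ 2.
have sum_cst (a : R) : \sum_(j <- r) a = N * a.
  by rewrite big_const_seq count_predT iter_addr_0 mulr_natl.
have inner i : \sum_(j <- r) (x i - x j) ^+ 2 = N * x i ^+ 2 - x i * S *+ 2 + Q.
  under eq_bigr do rewrite sqrrB.
  by rewrite !big_split /= sumrN sum_cst sumrMnl -mulr_sumr.
have double_sum : \sum_(i <- r) \sum_(j <- r) (x i - x j) ^+ 2 = (N * Q - S ^+ 2) *+ 2.
  rewrite (eq_bigr _ (fun i _ => inner i)) !big_split /= sumrN sum_cst sumrMnl -mulr_suml.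
  by rewrite -mulr_sumr -/S -/Q; ring.
rewrite -subr_ge0 -(pmulrn_lge0 _ (ltn0Sn 1)) -double_sum.
by apply: sumr_ge0 => i _; apply: sumr_ge0 => j _; apply: sqr_ge0.
Qed.

Variable p : nat.
Implicit Types v : 'cV[R]_p.

Lemma sqnormE v : sqnorm v = (v^T *m v) 0 0.
Proof. by rewrite /sqnorm mxE; apply: eq_bigr => i _; rewrite !mxE expr2. Qed.

Lemma sqnorm_ge0 v : 0 <= sqnorm v.
Proof. by apply: sumr_ge0 => i _; rewrite sqr_ge0. Qed.

Lemma sqnorm_eq0 v : sqnorm v = 0 -> v = 0.
Proof.
move=> /eqP; rewrite psumr_eq0 => [/allP v2_eq0|i _]; last exact: sqr_ge0.
apply/matrixP => i j; rewrite ord1 mxE.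
by have := v2_eq0 i (mem_index_enum i); rewrite sqrf_eq0 => /eqP.
Qed.

Lemma sqnormN v : sqnorm (- v) = sqnorm v.
Proof. by apply: eq_bigr => i _; rewrite mxE sqrrN. Qed.

Lemma sqnormZ (a : R) v : sqnorm (a *: v) = a ^+ 2 * sqnorm v.
Proof. by rewrite /sqnorm mulr_sumr; apply: eq_bigr => i _; rewrite mxE exprMn. Qed.

Lemma sqnorm_sum_le (I : Type) (r : seq I) (v : I -> 'cV[R]_p) :
  sqnorm (\sum_(i <- r) v i) <= (size r)%:R * \sum_(i <- r) sqnorm (v i).
Proof.
rewrite /sqnorm (exchange_big _ r) /= mulr_sumr; apply: ler_sum => j _.
by rewrite summxE; apply: sqr_sum_le.
Qed.

Lemma sqnorm_avg_le (I : Type) (r : seq I) (v : I -> 'cV[R]_p) :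
  sqnorm ((size r)%:R^-1 *: \sum_(i <- r) v i)
  <= (size r)%:R^-1 * \sum_(i <- r) sqnorm (v i).
Proof.
case: r => [|i r].
  by rewrite !big_nil scaler0 mulr0 /sqnorm big1 // => j _; rewrite mxE expr0n.
set N : R := (size _)%:R; have N_gt0 : 0 < N by rewrite ltr0n.
rewrite sqnormZ expr2 -mulrA ler_wpM2l ?invr_ge0 ?ler0n //.
by rewrite -(ler_pM2l N_gt0) mulrA mulfV ?gt_eqF // mul1r sqnorm_sum_le.
Qed.

Lemma sqnorm_proj (Q : 'M[R]_p) v : Q^T = Q -> Q *m Q = Q ->
  sqnorm v = sqnorm (Q *m v) + sqnorm (v - Q *m v).
Proof.
move=> sym_Q idem_Q; rewrite !sqnormE.
suff -> : v^T *m v = (Q *m v)^T *m (Q *m v) + (v - Q *m v)^T *m (v - Q *m v).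
  by rewrite mxE.
rewrite !linearB /= !trmx_mul sym_Q !mulmxBl !mulmxA.
by rewrite -!(mulmxA v^T Q Q) idem_Q subrr subr0 addrC subrK.
Qed.

Lemma sqnorm_proj_le (Q : 'M[R]_p) v : Q^T = Q -> Q *m Q = Q ->
  sqnorm (Q *m v) <= sqnorm v.
Proof.
by move=> sym_Q idem_Q; rewrite [leRHS](sqnorm_proj _ sym_Q idem_Q) lerDl sqnorm_ge0.
Qed.

End SquaredNorm.

Section Pseudoinverse.
Variable R : realType.

Lemma row_free_mulmx_tr_unit r q (C : 'M[R]_(r, q)) :
  row_free C -> C *m C^T \in unitmx.
Proof.
move=> free_C; rewrite -row_free_unit; apply: inj_row_free => u uCCt0.
have uC0 : (u *m C)^T = 0.
  apply: sqnorm_eq0; rewrite sqnormE trmxK trmx_mul mulmxA -(mulmxA u) uCCt0.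
  by rewrite mul0mx mxE.
by apply: (row_free_inj free_C); rewrite mul0mx -[u *m C]trmxK uC0 trmx0.
Qed.

(* Full-rank factorization formula: (B C)^+ = C^+ B^+ with C^+ = C^T (C C^T)^-1
   and B^+ = (B^T B)^-1 B^T. *)
Lemma is_MP_full_rank_factor p r q (B : 'M[R]_(p, r)) (C : 'M[R]_(r, q)) :
  C *m C^T \in unitmx -> B^T *m B \in unitmx ->
  is_MP (B *m C) (C^T *m invmx (C *m C^T) *m invmx (B^T *m B) *m B^T).
Proof.
move=> unit_CCt unit_BtB.
have sym_inv (M : 'M[R]_r) : M^T = M -> (invmx M)^T = invmx M.
  by move=> sym_M; rewrite trmx_inv sym_M.
have sym_CCt : (C *m C^T)^T = C *m C^T by rewrite trmx_mul trmxK.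
have sym_BtB : (B^T *m B)^T = B^T *m B by rewrite trmx_mul trmxK.
have AG : B *m C *m (C^T *m invmx (C *m C^T) *m invmx (B^T *m B) *m B^T)
     = B *m invmx (B^T *m B) *m B^T.
  by rewrite !mulmxA -(mulmxA B C) -(mulmxA B) (mulmxV unit_CCt) mulmx1.
have GA : C^T *m invmx (C *m C^T) *m invmx (B^T *m B) *m B^T *m (B *m C)
     = C^T *m invmx (C *m C^T) *m C.
  by rewrite !mulmxA -(mulmxA _ B^T B) -(mulmxA _ (invmx _)) (mulVmx unit_BtB) mulmx1.
split.
- rewrite AG !mulmxA -(mulmxA _ B^T B) -(mulmxA B (invmx (B^T *m B))).
  by rewrite (mulVmx unit_BtB) mulmx1.
- rewrite GA !mulmxA -(mulmxA _ C C^T) -(mulmxA C^T (invmx (C *m C^T))).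
  by rewrite (mulVmx unit_CCt) mulmx1.
- by rewrite AG !trmx_mul trmxK sym_inv // mulmxA.
- by rewrite GA !trmx_mul trmxK sym_inv // mulmxA.
Qed.

Variables p q : nat.
Implicit Type A : 'M[R]_(p, q).

Lemma pinvP A : is_MP A (pinv A).
Proof.
apply: (epsilon_spec (inhabits 0) (fun B => is_MP A B)).
have unit_row := row_free_mulmx_tr_unit (row_base_free A).
have unit_col : (col_base A)^T *m col_base A \in unitmx.
  have := row_free_mulmx_tr_unit (C := (col_base A)^T); rewrite trmxK; apply.
  by rewrite /row_free mxrank_tr; apply: col_base_full.
have := is_MP_full_rank_factor unit_row unit_col.
by rewrite mulmx_base => MP_A; eexists; exact: MP_A.
Qed.

Lemma trmx_pinvM A : (pinv A *m A)^T = pinv A *m A.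
Proof. by case: (pinvP A). Qed.

Lemma pinvM_idem A : pinv A *m A *m (pinv A *m A) = pinv A *m A.
Proof. by case: (pinvP A) => _ BAB _ _; rewrite mulmxA BAB. Qed.

Lemma mulmx_pinvM A : A *m (pinv A *m A) = A.
Proof. by case: (pinvP A) => ABA _ _ _; rewrite mulmxA ABA. Qed.

Lemma sqnorm_pinvM_le A v : sqnorm (pinv A *m A *m v) <= sqnorm v.
Proof. exact: sqnorm_proj_le (trmx_pinvM A) (pinvM_idem A). Qed.

Lemma subr_projker A : 1%:M - projker A = pinv A *m A.
Proof. by rewrite /projker opprB addrC subrK. Qed.

End Pseudoinverse.

Section LinearSystem.
Variables (R : realType) (d T : nat) (n : 'I_T -> nat).
Variables (X : forall m : 'I_T, 'M[R]_(n m, d)) (y : forall m : 'I_T, 'cV[R]_(n m)).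

Let gram : 'M[R]_d := \sum_(m < T) (X m)^T *m X m.

Lemma gram_mul_eq0 (z : 'cV[R]_d) : gram *m z = 0 -> forall m, X m *m z = 0.
Proof.
move=> gram_z0 m; apply: sqnorm_eq0; apply/eqP.
suff /eqP : \sum_(m < T) sqnorm (X m *m z) = 0.
  by rewrite psumr_eq0 => [/allP/(_ m (mem_index_enum m))|i _] //; apply: sqnorm_ge0.
have quad0 : (z^T *m (gram *m z)) 0 0 = 0 by rewrite gram_z0 mulmx0 mxE.
rewrite -[RHS]quad0 /gram mulmx_suml mulmx_sumr summxE.
by apply: eq_bigr => i _; rewrite sqnormE trmx_mul !mulmxA.
Qed.

(* All solutions have the same image under the orthogonal projection
   gram^+ gram onto the joint row space, and that image is again a solution. *)
Lemma min_norm_solP : (exists w, forall m, X m *m w = y m) ->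
  (forall m, X m *m min_norm_sol X y = y m) /\
  (forall v, (forall m, X m *m v = y m) -> sqnorm (min_norm_sol X y) <= sqnorm v).
Proof.
case=> w0 sol_w0.
suff ex_min : exists w, (forall m, X m *m w = y m) /\
    (forall v, (forall m, X m *m v = y m) -> sqnorm w <= sqnorm v).
  exact: epsilon_spec (inhabits 0) _ ex_min.
pose P := pinv gram *m gram.
have P_sol v : (forall m, X m *m v = y m) -> P *m v = P *m w0.
  move=> sol_v; apply/eqP; rewrite -subr_eq0 -mulmxBr /P -mulmxA.
  suff -> : gram *m (v - w0) = 0 by rewrite mulmx0.
  rewrite /gram mulmx_suml; apply: big1 => m _.
  by rewrite -mulmxA mulmxBr sol_v sol_w0 subrr mulmx0.
exists (P *m w0); split => [m|v sol_v].
  rewrite -(sol_w0 m); apply/eqP; rewrite -subr_eq0 -mulmxBr; apply/eqP.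
  apply: gram_mul_eq0; rewrite mulmxBr mulmxA /P mulmxA.
  by case: (pinvP gram) => -> _ _ _; rewrite subrr.
rewrite -(P_sol v sol_v); exact: sqnorm_pinvM_le.
Qed.

Variable ws : 'cV[R]_d.
Hypothesis sol_ws : forall m, X m *m ws = y m.

Lemma iterate_rcons_err s m :
  iterate X y (rcons s m) - ws
  = (iterate X y s - ws) - pinv (X m) *m X m *m (iterate X y s - ws).
Proof.
rewrite /iterate foldl_rcons -/(iterate X y s) /step -(sol_ws m).
set w := iterate X y s.
by rewrite -mulmxBr -mulmxA -(opprB w ws) !mulmxN addrAC.
Qed.

Lemma sqnorm_iterate_rcons_err s m :
  sqnorm (iterate X y (rcons s m) - ws)
  = sqnorm (iterate X y s - ws) - sqnorm (pinv (X m) *m X m *m (iterate X y s - ws)).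
Proof.
rewrite iterate_rcons_err.
rewrite [sqnorm (iterate X y s - ws)](sqnorm_proj _ (trmx_pinvM (X m)) (pinvM_idem (X m))).
by rewrite [RHS]addrC addKr.
Qed.

Lemma sqnorm_iterate_err_le s : sqnorm (iterate X y s - ws) <= sqnorm ws.
Proof.
elim/last_ind: s => [|s m IHs]; first by rewrite /iterate /= sub0r sqnormN.
by rewrite sqnorm_iterate_rcons_err; apply: le_trans IHs; rewrite gerDl oppr_le0 sqnorm_ge0.
Qed.

Lemma sqnorm_residual_le m w : spec_norm_le1 (X m) ->
  sqnorm (X m *m w - y m) <= sqnorm (pinv (X m) *m X m *m (w - ws)).
Proof.
move=> contr_Xm; rewrite -(sol_ws m) -mulmxBr -{1}(mulmx_pinvM (X m)) -!mulmxA.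
exact: contr_Xm.
Qed.

End LinearSystem.

Section UniformExpectation.
Variables (R : realType) (T k : nat).
Implicit Types F G : {ffun 'I_k -> 'I_T} -> R.

Lemma eq_expect_unif F G : F =1 G -> expect_unif F = expect_unif G.
Proof. by move=> eqFG; rewrite /expect_unif (eq_bigr _ (fun tau _ => eqFG tau)). Qed.

Lemma ler_expect_unif F G : (forall tau, F tau <= G tau) -> expect_unif F <= expect_unif G.
Proof. by move=> leFG; rewrite ler_wpM2l ?invr_ge0 ?ler0n // ler_sum. Qed.

Lemma expect_unifZ a F : expect_unif (fun tau => a * F tau) = a * expect_unif F.
Proof. by rewrite /expect_unif -mulr_sumr mulrCA. Qed.

Lemma expect_unifB F G :
  expect_unif (fun tau => F tau - G tau) = expect_unif F - expect_unif G.
Proof. by rewrite /expect_unif sumrB mulrBr. Qed.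

Lemma expect_unif_sum (I : Type) (r : seq I) (F : I -> {ffun 'I_k -> 'I_T} -> R) :
  expect_unif (fun tau => \sum_(i <- r) F i tau) = \sum_(i <- r) expect_unif (F i).
Proof. by rewrite /expect_unif exchange_big mulr_sumr. Qed.

Lemma expect_unif_cst (a : R) :
  (0 < T)%N -> expect_unif (fun _ : {ffun 'I_k -> 'I_T} => a) = a.
Proof.
move=> T_gt0; rewrite /expect_unif sumr_const card_ffun !card_ord.
rewrite -[a *+ _]mulr_natl mulKf //.
by rewrite pnatr_eq0 -lt0n expn_gt0 T_gt0.
Qed.

(* Independence of the i-th draw: shifting coordinate i by m (in Z/T) is a
   bijection of the sample space fixing every other coordinate. *)
Lemma expect_unif_resample (i : 'I_k) (F : 'I_T -> {ffun 'I_k -> 'I_T} -> R) :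
  (forall m (tau tau' : {ffun 'I_k -> 'I_T}),
    (forall j, j != i -> tau j = tau' j) -> F m tau = F m tau') ->
  expect_unif (fun tau => F (tau i) tau)
  = expect_unif (fun tau => T%:R^-1 * \sum_(m < T) F m tau).
Proof.
case: T F => [|T'] F F_indep.
  by congr (_ * _); apply: eq_bigr => tau _; case: (tau i).
rewrite /expect_unif; congr (_ * _); rewrite -mulr_sumr.
have T_neq0 : T'.+1%:R != 0 :> R by rewrite pnatr_eq0.
set L := \sum_tau _; apply: (mulfI T_neq0); rewrite mulrA mulfV // mul1r.
have shift m : L = \sum_(tau : {ffun 'I_k -> 'I_T'.+1}) F (tau i + m) tau.
  pose sh (tau : {ffun 'I_k -> 'I_T'.+1}) : {ffun 'I_k -> 'I_T'.+1} :=
    [ffun j => if j == i then tau j + m else tau j].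
  have sh_inj : injective sh.
    move=> t1 t2 /ffunP eq_sh; apply/ffunP => j; have := eq_sh j; rewrite !ffunE.
    by case: ifP => _ // /addIr.
  rewrite /L (reindex_inj sh_inj); apply: eq_bigr => tau _.
  rewrite ffunE eqxx; apply: F_indep => j /negbTE j_neq_i.
  by rewrite ffunE j_neq_i.
have -> : T'.+1%:R * L = \sum_(m < T'.+1) L by rewrite sumr_const card_ord mulr_natl.
rewrite (eq_bigr _ (fun m _ => shift m)) exchange_big /=.
by apply: eq_bigr => tau _; rewrite [RHS](reindex_inj (addrI (tau i))).
Qed.

End UniformExpectation.

Definition prefix (k T : nat) (tau : {ffun 'I_k -> 'I_T}) (t : nat) : seq 'I_T :=
  take t [seq tau i | i <- enum 'I_k].

Lemma prefix_rcons k T (tau : {ffun 'I_k -> 'I_T}) (i : 'I_k) :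
  prefix tau i.+1 = rcons (prefix tau i) (tau i).
Proof.
rewrite /prefix (take_nth (tau i)); last by rewrite size_map size_enum_ord.
by rewrite (nth_map i) ?size_enum_ord // nth_ord_enum.
Qed.

Lemma eq_prefix k T (tau tau' : {ffun 'I_k -> 'I_T}) (t : nat) :
  (forall j : 'I_k, (j < t)%N -> tau j = tau' j) -> prefix tau t = prefix tau' t.
Proof.
move=> eq_tau; rewrite /prefix -!(map_take t _ (enum 'I_k)).
apply/eq_in_map => j /index_ltn.
by rewrite index_enum_ord; apply: eq_tau.
Qed.

Section RandomizedProjections.
Variables (R : realType) (d T : nat) (n : 'I_T -> nat).
Variables (X : forall m : 'I_T, 'M[R]_(n m, d)) (y : forall m : 'I_T, 'cV[R]_(n m)).

(* (1/T) sum_m ||(I - P_m) v||^2, as I - P_m = X_m^+ X_m. *)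
Definition proj_loss (v : 'cV[R]_d) : R :=
  T%:R^-1 * \sum_(m < T) sqnorm (pinv (X m) *m X m *m v).

Lemma proj_loss_le v : proj_loss v <= sqnorm v.
Proof.
apply: (@le_trans _ _ (T%:R^-1 * \sum_(m < T) sqnorm v)).
  by rewrite ler_wpM2l ?invr_ge0 // ler_sum // => m _; apply: sqnorm_pinvM_le.
rewrite sumr_const card_ord -[sqnorm v *+ T]mulr_natl mulrA.
have [T0|T_gt0] := posnP T; last by rewrite mulVf ?mul1r ?pnatr_eq0 -?lt0n.
by rewrite T0 mulr0 mul0r sqnorm_ge0.
Qed.

Lemma proj_loss_avg_le (I : Type) (r : seq I) (e : I -> 'cV[R]_d) :
  proj_loss ((size r)%:R^-1 *: \sum_(i <- r) e i)
  <= (size r)%:R^-1 * \sum_(i <- r) proj_loss (e i).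
Proof.
rewrite /proj_loss -[in X in _ <= X]mulr_sumr mulrCA (exchange_big _ r).
rewrite [in X in _ <= X]mulr_sumr /=.
rewrite ler_wpM2l ?invr_ge0 // ler_sum // => m _.
by rewrite -scalemxAr mulmx_sumr; apply: sqnorm_avg_le.
Qed.

Variable ws : 'cV[R]_d.
Hypothesis sol_ws : forall m, X m *m ws = y m.

Definition err (k : nat) (tau : {ffun 'I_k -> 'I_T}) (t : nat) : 'cV[R]_d :=
  iterate X y (prefix tau t) - ws.

Lemma avg_iterate_err k (tau : {ffun 'I_k -> 'I_T}) : (0 < k)%N ->
  avg_iterate X y tau - ws = k%:R^-1 *: \sum_(1 <= t < k.+1) err tau t.
Proof.
move=> k_gt0; rewrite /err sumrB sumr_const_nat subSS subn0 scalerBr.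
by rewrite -scaler_nat scalerA mulVf ?pnatr_eq0 -?lt0n // scale1r.
Qed.

Lemma expect_sqnorm_err_succ k (i : 'I_k) : (0 < T)%N ->
  expect_unif (fun tau : {ffun 'I_k -> 'I_T} => sqnorm (err tau i.+1))
  = expect_unif (fun tau : {ffun 'I_k -> 'I_T} => sqnorm (err tau i))
    - expect_unif (fun tau : {ffun 'I_k -> 'I_T} => proj_loss (err tau i)).
Proof.
move=> T_gt0.
pose F m (tau : {ffun 'I_k -> 'I_T}) :=
  sqnorm (err tau i) - sqnorm (pinv (X m) *m X m *m err tau i).
rewrite (@eq_expect_unif _ _ _ _ (fun tau => F (tau i) tau)); last first.
  by move=> tau; rewrite /err prefix_rcons sqnorm_iterate_rcons_err.
rewrite expect_unif_resample => [|m tau tau' eq_tau]; last first.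
  rewrite /F /err (@eq_prefix _ _ tau tau') // => j lt_ji; apply: eq_tau.
  by apply/eqP => eq_ji; rewrite eq_ji ltnn in lt_ji.
rewrite -expect_unifB; apply: eq_expect_unif => tau.
rewrite /F sumrB sumr_const card_ord mulrBr -[sqnorm _ *+ T]mulr_natl mulKf //.
by rewrite pnatr_eq0 -lt0n.
Qed.

Lemma sum_expect_proj_loss_err_le k : (0 < k)%N -> (0 < T)%N ->
  \sum_(1 <= t < k.+1)
     expect_unif (fun tau : {ffun 'I_k -> 'I_T} => proj_loss (err tau t))
  <= sqnorm ws.
Proof.
move=> k_gt0 T_gt0.
pose g t := expect_unif (fun tau : {ffun 'I_k -> 'I_T} => sqnorm (err tau t)).
have g_le t : g t <= sqnorm ws.
  rewrite -(expect_unif_cst k (sqnorm ws) T_gt0); apply: ler_expect_unif => tau.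
  exact: sqnorm_iterate_err_le.
have telescope : \sum_(1 <= t < k)
    expect_unif (fun tau : {ffun 'I_k -> 'I_T} => proj_loss (err tau t)) = g 1%N - g k.
  rewrite -opprB -(telescope_sumr _ k_gt0) -sumrN; apply: eq_big_nat => t /andP[_ lt_tk].
  by rewrite /g (expect_sqnorm_err_succ (Ordinal lt_tk)) // opprB subKr.
(* The loss of w_k cannot be telescoped (that would need a (k+1)-th draw);
   it is bounded by E ||w_k - w⋆||^2 instead. *)
rewrite big_nat_recr //= telescope -[leRHS](subrK (g k) (sqnorm ws)).
rewrite lerD ?lerB // ler_expect_unif // => tau; exact: proj_loss_le.
Qed.

End RandomizedProjections.

Theorem mainTheorem18 (R : realType) (d T : nat) (n : 'I_T -> nat)
  (X : forall m : 'I_T, 'M[R]_(n m, d)) (y : forall m : 'I_T, 'cV[R]_(n m))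
  (hd : (1 <= d)%N) (hT : (1 <= T)%N) (hS : in_ST X y) (k : nat) (hk : (1 <= k)%N) :
  expect_unif (fun tau : {ffun 'I_k -> 'I_T} =>
     T%:R^-1 * \sum_(m < T) sqnorm (X m *m avg_iterate X y tau - y m))
  <= expect_unif (fun tau : {ffun 'I_k -> 'I_T} =>
     T%:R^-1 * \sum_(m < T)
        sqnorm ((1%:M - projker (X m)) *m (avg_iterate X y tau - min_norm_sol X y)))
  /\
  expect_unif (fun tau : {ffun 'I_k -> 'I_T} =>
     T%:R^-1 * \sum_(m < T)
        sqnorm ((1%:M - projker (X m)) *m (avg_iterate X y tau - min_norm_sol X y)))
  <= k%:R^-1.
Proof.
case: hS => _ [contr_X [w [w_le1 sol_w]]].
have [sol_ws min_ws] := min_norm_solP (ex_intro _ w sol_w).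
set ws := min_norm_sol X y in sol_ws min_ws *.
have ws_le1 : sqnorm ws <= 1 := le_trans (min_ws w sol_w) w_le1.
under [X in _ <= X /\ _]eq_expect_unif do under eq_bigr do rewrite subr_projker.
under [X in _ /\ X <= _]eq_expect_unif do under eq_bigr do rewrite subr_projker.
split.
  apply: ler_expect_unif => tau; rewrite ler_wpM2l ?invr_ge0 // ler_sum // => m _.
  exact: sqnorm_residual_le.
apply: (@le_trans _ _ (expect_unif (fun tau : {ffun 'I_k -> 'I_T} =>
  k%:R^-1 * \sum_(1 <= t < k.+1) proj_loss X (err X y ws tau t)))).
  apply: ler_expect_unif => tau; rewrite (avg_iterate_err X y ws tau hk).
  have := proj_loss_avg_le X (index_iota 1 k.+1) (err X y ws tau).
  by rewrite size_iota subSS subn0.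
rewrite expect_unifZ expect_unif_sum -[leRHS]mulr1 ler_wpM2l ?invr_ge0 //.
exact: le_trans (sum_expect_proj_loss_err_le sol_ws hk hT) ws_le1.
Qed.
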